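(* Let $H_{44}$ and $H_{521}$ be the term-normalized complete homogeneous symmetric polynomials in three variables $x_1,x_2,x_3$ associated to the partitions $(4,4)$ and $(5,2,1)$ of $8$. Then the polynomial $(H_{44}-H_{521})(x_1^2,x_2^2,x_3^2)$ is a sum of squares of polynomials with rational coefficients (in fact a positive rational combination of $41$ squares), so $H_{44}-H_{521}\ge 0$ on $\mathbb{R}^3_{\ge 0}$, while the partitions $(4,4)$ and $(5,2,1)$ are incomparable in dominance order. Thus $H_{44}-H_{521}$ is a counterexample to the statement ''$H_\mu - H_\lambda \geq 0$ on the nonnegative orthant implies $\mu$ dominates $\lambda$'', and it is degree-minimal: there is no pair of dominance-incomparable partitions $\lambda,\mu$ with $|\lambda|=|\mu|\le 7$ such that $H_\mu-H_\lambda\ge 0$ on the nonnegative orthant.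
   Context: For an integer $d\ge 0$, $h_d(x_1,\dots,x_n)$ denotes the sum of all monomials of degree $d$ in $x_1,\dots,x_n$ (with $h_0=1$), and for a partition $\lambda=(\lambda_1\ge\lambda_2\ge\cdots)$ one sets $h_\lambda=\prod_i h_{\lambda_i}$. The term-normalized version is $H_\lambda(x)=h_\lambda(x)/h_\lambda(1,\dots,1)$. For partitions $\lambda,\mu$ of the same integer, $\mu$ dominates $\lambda$ (written $\mu\succeq\lambda$) if $\mu_1+\cdots+\mu_k\ge\lambda_1+\cdots+\lambda_k$ for all $k$; $\lambda,\mu$ are incomparable if neither dominates the other. A polynomial is a sum of squares if it equals $\sum_i d_i q_i^2$ with $d_i>0$ and $q_i$ polynomials. Explicitly, $(H_{44}-H_{521})(x_1^2,x_2^2,x_3^2)=\frac{1}{9450}\big(17\sum x_i^{16}+9\sum_{i\ne j} x_i^{14}x_j^{2}+\sum_{i\ne j}x_i^{12}x_j^4+18\sum_{i\ne j}x_i^{10}x_j^6+60\sum_{i<j}x_i^8x_j^8-32\sum x_i^{12}x_j^2x_k^2-6\cdot(\ldots)\big)$ as given in the paper; its nonnegativity is meant on $\mathbb{R}^3_{\ge0}$ for the three-variable polynomial. *)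

From HB Require Import structures.
From mathcomp Require Import all_boot all_order all_algebra.
From mathcomp Require Import mpoly.
Set Implicit Arguments. Unset Strict Implicit. Unset Printing Implicit Defensive.
Import Order.TTheory GRing.Theory Num.Theory.
Local Open Scope ring_scope.

Definition is_partition (l : seq nat) : bool :=
  sorted geq l && all (fun k => 0 < k)%N l.

Definition psize (l : seq nat) : nat := sumn l.

Definition dominates (mu lam : seq nat) : Prop :=
  forall k : nat, (sumn (take k lam) <= sumn (take k mu))%N.

Definition incomparable (lam mu : seq nat) : Prop :=
  ~ dominates mu lam /\ ~ dominates lam mu.

Definition hcomp (R : comRingType) (n d : nat) : {mpoly R[n]} :=
  \sum_(m : 'X_{1..n < d.+1} | mdeg m == d) 'X_[m].

Definition hpart (R : comRingType) (n : nat) (lam : seq nat) : {mpoly R[n]} :=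
  \prod_(k <- lam) hcomp R n k.

Definition Hnorm (R : fieldType) (n : nat) (lam : seq nat) : {mpoly R[n]} :=
  ((hpart R n lam).@[fun _ => 1])^-1 *: hpart R n lam.

Definition sqsubst (R : comRingType) (n : nat) (p : {mpoly R[n]}) : {mpoly R[n]} :=
  p \mPo [tuple ('X_i ^+ 2) | i < n].

Definition sos_cert (n : nat) (p : {mpoly rat[n]}) (s : seq (rat * {mpoly rat[n]})) : Prop :=
  all (fun dq => 0 < dq.1) s /\ p = \sum_(dq <- s) dq.1 *: dq.2 ^+ 2.

From Stdlib Require Import ZArith.
From HB Require Import structures.
From mathcomp Require Import all_boot all_order all_algebra.
From mathcomp Require Import mpoly.
From mathcomp Require Import ssrZ zify ring lra.
Set Implicit Arguments. Unset Strict Implicit. Unset Printing Implicit Defensive.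
Import Order.TTheory GRing.Theory Num.Theory.
Local Open Scope ring_scope.

(* Since h_44(1,1,1) = 225 and h_521(1,1,1) = 378, we have
   9450 (H_44 - H_521) = 42 h_44 - 25 h_521.  Nonnegativity on the orthant follows
   from an exact polynomial identity
     N (42 h_44 - 25 h_521)(y) = s_0(y) + y_0 y_1 s_01(y) + y_0 y_2 s_02(y) + y_1 y_2 s_12(y)
   with N a positive integer and each s a combination of squares with positive
   integer weights, 41 squares in all.  Substituting y_i = x_i^2 turns every
   multiplier y_a y_b into the square (x_a x_b)^2, which yields the rational sum
   of squares.  Minimality is a finite check: the partitions of n <= 7 are
   enumerated, and for each of the twelve ordered incomparable pairs (lam, mu)
   some point of N^3 makes H_mu - H_lam negative. *)

(* [0%N]: in [ring_scope] a bare [0] would be the semiring zero of [nat]. *)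
Definition h3 (R : pzSemiRingType) (d : nat) (a b c : R) : R :=
  \sum_(0%N <= i < d.+1) \sum_(0%N <= j < (d - i).+1) a ^+ i * b ^+ j * c ^+ (d - i - j).

Definition h3part (R : pzSemiRingType) (lam : seq nat) (a b c : R) : R :=
  \prod_(k <- lam) h3 k a b c.

Lemma rmorph_h3 (R S : pzSemiRingType) (f : {rmorphism R -> S}) d a b c :
  f (h3 d a b c) = h3 d (f a) (f b) (f c).
Proof.
rewrite rmorph_sum; apply: eq_bigr => i _; rewrite rmorph_sum.
by apply: eq_bigr => j _; rewrite !rmorphM !rmorphXn.
Qed.

Lemma h3_gt0 (R : numDomainType) d : 0 < h3 d 1 1 1 :> R.
Proof.
rewrite /h3; under eq_bigr do under eq_bigr do rewrite !expr1n !mulr1.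
rewrite big_ltn // [X in 0 < X + _]big_ltn // -addrA ltr_pwDl ?ltr01 //.
by rewrite addr_ge0 ?sumr_ge0 // => *; apply: sumr_ge0.
Qed.

Lemma h3part_gt0 (R : numDomainType) lam : 0 < h3part lam 1 1 1 :> R.
Proof. by apply: prodr_gt0 => k _; apply: h3_gt0. Qed.

Definition mnm3 (i j k : nat) : 'X_{1..3} := [multinom nth 0%N [:: i; j; k] l | l < 3].

Lemma mdeg3 (m : 'X_{1..3}) : mdeg m = (m 0%R + m 1%R + m 2%R)%N.
Proof.
rewrite mdegE !big_ord_recr big_ord0 /=.
by congr (m _ + m _ + m _)%N; apply: val_inj.
Qed.

Lemma mnm3_eta (m : 'X_{1..3}) : m = mnm3 (m 0%R) (m 1%R) (m 2%R).
Proof. apply/mnmP => -[[|[|[|i]]] Hi]; rewrite mnmE //=; congr (m _); exact: val_inj. Qed.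

Lemma mdeg_mnm3 i j k : mdeg (mnm3 i j k) = (i + j + k)%N.
Proof. by rewrite mdeg3 !mnmE. Qed.

Lemma mpolyX_mnm3 (R : comNzRingType) i j k :
  'X_[mnm3 i j k] = 'X_0 ^+ i * 'X_1 ^+ j * 'X_2 ^+ k :> {mpoly R[3]}.
Proof.
rewrite mpolyXE_id !big_ord_recr big_ord0 /= mul1r !mnmE /=.
by congr ('X_ _ ^+ _ * 'X_ _ ^+ _ * 'X_ _ ^+ _); apply: val_inj.
Qed.

Definition bmnm3 (d i j : nat) : 'X_{1..3 < d.+1} := insubd bm0 (mnm3 i j (d - i - j)).

Lemma val_bmnm3 d i j :
  (i <= d)%N -> (j <= d - i)%N -> val (bmnm3 d i j) = mnm3 i j (d - i - j).
Proof. by move=> le_i le_j; rewrite insubdK // -topredE /= mdeg_mnm3; lia. Qed.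

Lemma mdeg_bmnm3 d i j :
  (i <= d)%N -> (j <= d)%N -> (mdeg (bmnm3 d i j) == d) = (j <= d - i)%N.
Proof.
move=> le_i le_j; rewrite /bmnm3 /insubd.
by case: insubP => [u _ -> | ] /=; rewrite mdeg_mnm3 ?mdeg0; lia.
Qed.

(* A monomial of degree d in three variables is determined by its first two exponents. *)
Lemma hcomp3E (R : comNzRingType) d : hcomp R 3 d = h3 d 'X_0 'X_1 'X_2.
Proof.
rewrite /hcomp /h3; apply/esym.
under eq_bigr => i _ do
  rewrite (big_nat_widen _ _ d.+1 _ _ (leq_subr i d : (d - i < d.+1)%N)) big_mkord.
rewrite big_mkord pair_big_dep /=.
pose pair_of (m : 'X_{1..3 < d.+1}) := (inord (m 0%R) : 'I_d.+1, inord (m 1%R) : 'I_d.+1).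
pose mnm_of (p : 'I_d.+1 * 'I_d.+1) := bmnm3 d p.1 p.2.
rewrite [RHS](reindex_onto mnm_of pair_of) /mnm_of; last first.
  move=> m /eqP deg_m; have := mdeg3 m; rewrite deg_m => {}deg_m.
  apply: val_inj; rewrite /mnm_of val_bmnm3 /= !inordK; try lia.
  by rewrite [RHS]mnm3_eta; congr mnm3; lia.
apply: eq_big => -[i j] /=; have := ltn_ord i; have := ltn_ord j;
  rewrite !ltnS => le_j le_i.
  rewrite mdeg_bmnm3 //; case: (boolP (j <= d - i)%N) => //= le_ij.
  apply/esym/eqP; rewrite /pair_of val_bmnm3 //= !mnmE.
  by congr pair; apply: val_inj; rewrite /= inordK.
by move=> le_ij; rewrite val_bmnm3 ?mpolyX_mnm3.
Qed.

Lemma rmorph_hpart (R : comNzRingType) (S : pzSemiRingType)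
    (f : {rmorphism {mpoly R[3]} -> S}) lam :
  f (hpart R 3 lam) = h3part lam (f 'X_0) (f 'X_1) (f 'X_2).
Proof. by rewrite rmorph_prod; apply: eq_bigr => k _; rewrite hcomp3E rmorph_h3. Qed.

Lemma hpart_meval (R : comNzRingType) lam (x : 'I_3 -> R) :
  (hpart R 3 lam).@[x] = h3part lam (x 0) (x 1) (x 2).
Proof. by rewrite rmorph_hpart /= !mevalXU. Qed.

Lemma HnormE (F : fieldType) lam : Hnorm F 3 lam = (h3part lam 1 1 1)^-1 *: hpart F 3 lam.
Proof. by rewrite /Hnorm hpart_meval. Qed.

Definition diff44_521 (R : pzRingType) (a b c : R) : R :=
  42 * h3part [:: 4; 4]%N a b c - 25 * h3part [:: 5; 2; 1]%N a b c.

Lemma Hnorm44_sub_521E (F : numFieldType) :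
  Hnorm F 3 [:: 4; 4]%N - Hnorm F 3 [:: 5; 2; 1]%N =
  9450^-1 *: (42 * hpart F 3 [:: 4; 4]%N - 25 * hpart F 3 [:: 5; 2; 1]%N).
Proof.
have norm44 : (h3part [:: 4; 4]%N 1 1 1)^-1 = 9450^-1 * 42 :> F.
  by rewrite /h3part /h3 unlock /=; field.
have norm521 : (h3part [:: 5; 2; 1]%N 1 1 1)^-1 = 9450^-1 * 25 :> F.
  by rewrite /h3part /h3 unlock /=; field.
by rewrite !HnormE norm44 norm521 -!scalerA -scalerBr !scaler_nat !mulr_natl.
Qed.

Lemma Hnorm44_sub_521_meval (F : numFieldType) (x : 'I_3 -> F) :
  (Hnorm F 3 [:: 4; 4]%N - Hnorm F 3 [:: 5; 2; 1]%N).@[x] =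
  9450^-1 * diff44_521 (x 0) (x 1) (x 2).
Proof. by rewrite Hnorm44_sub_521E mevalZ rmorphB !rmorphM !rmorph_nat /= !hpart_meval. Qed.

Lemma Hnorm44_sub_521_sqsubst (F : numFieldType) :
  sqsubst (Hnorm F 3 [:: 4; 4]%N - Hnorm F 3 [:: 5; 2; 1]%N) =
  9450^-1 *: diff44_521 ('X_0 ^+ 2) ('X_1 ^+ 2) ('X_2 ^+ 2).
Proof.
rewrite Hnorm44_sub_521E /sqsubst comp_mpolyZ rmorphB !rmorphM !rmorph_nat /=.
by rewrite !rmorph_hpart /= !comp_mpolyXU -!tnth_nth !tnth_mktuple.
Qed.

(* The weights of the certificate have up to 220 digits: as binary [positive]
   literals they stay small, and their positivity is structural. *)
Definition posr (R : pzRingType) (p : positive) : R := (int_of_Z (Zpos p))%:~R.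

Lemma posr_gt0 (R : numDomainType) p : 0 < posr R p.
Proof.
rewrite /posr ltr0z -[int_of_Z _]/(Posz (Pos.to_nat p)) ltz_nat.
exact/ssrnat.ltP/Pos2Nat.is_pos.
Qed.

Definition sos (R : pzRingType) (s : seq (positive * R)) : R :=
  \sum_(t <- s) posr R t.1 * t.2 ^+ 2.

Lemma sos_ge0 (R : realDomainType) (s : seq (positive * R)) : 0 <= sos s.
Proof. by apply: sumr_ge0 => t _; rewrite mulr_ge0 ?sqr_ge0 ?ltW ?posr_gt0. Qed.

Definition cert_scale : positive := 981578361084234406647221018548568805655522423417191059836663476551653303308914616269688768811944181329741809067715208860218834139882194025085951936580275214751641574364939892904549730108843003667696289928906713781349600%positive.

(* Coefficients beyond 5000 are written [n%:R]: the [nat] literal then stays an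
   abstract [Nat.of_num_uint] term, while a bare ring numeral would be unary. *)
Section Certificate.
Variables (R : pzRingType) (y0 y1 y2 : R).

Definition sigma0 : seq (positive * R) := [::
  (3608743974574391200908900803487385314910008909622025955281851016734019497459244912756208708867441843124050768631305914927275125514272772151051293884486305936586917552812279018031432831282511042895942242385686447725550%positive,
   68 * y0 ^+ 4 - 4 * y0 ^+ 3 * y1 - 4 * y0 ^+ 3 * y2 - 17 * y0 ^+ 2 * y1 ^+ 2
   - 25 * y0 ^+ 2 * y1 * y2 - 17 * y0 ^+ 2 * y2 ^+ 2 - 28 * y0 * y1 ^+ 2 * y2
   - 18 * y0 * y1 * y2 ^+ 2 - 5 * y0 * y2 ^+ 3 + 36 * y1 ^+ 4 - y1 ^+ 3 * y2
   - 15 * y1 ^+ 2 * y2 ^+ 2 - 3 * y1 * y2 ^+ 3 + 33 * y2 ^+ 4);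
  (18553953596783502318297690506361878225758400563609387944893835561614496130895860733965083336079392509635222460829336323533548203158214766843451382439518282450318342173842051506588343605565609475043404845170624409900%positive,
   778 * y0 ^+ 3 * y1 - 395 * y0 ^+ 3 * y2 + 323 * y0 ^+ 2 * y1 ^+ 2 - 25 * y0 ^+ 2 * y1 * y2
   - 510 * y0 ^+ 2 * y2 ^+ 2 + 272 * y0 * y1 ^+ 3 - 28 * y0 * y1 ^+ 2 * y2
   - 188 * y0 * y1 * y2 ^+ 2 - 107 * y0 * y2 ^+ 3 + 104 * y1 ^+ 4 - 154 * y1 ^+ 3 * y2
   - 151 * y1 ^+ 2 * y2 ^+ 2 + 65 * y1 * y2 ^+ 3 + 16 * y2 ^+ 4);
  (11935414959901598343022694161582923897449305996948559997850501553238976585508367672358058679129287193544434927691327714082957560589156962059207382656821084559556961325739390608544361497506919479159113117943792900%positive,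
   26427%:R * y0 ^+ 3 * y2 - 15057%:R * y0 ^+ 2 * y1 ^+ 2 - 8727%:R * y0 ^+ 2 * y1 * y2
   + 6822%:R * y0 ^+ 2 * y2 ^+ 2 - 1460 * y0 * y1 ^+ 3 - 3488 * y0 * y1 ^+ 2 * y2
   - 6748%:R * y0 * y1 * y2 ^+ 2 + 12067%:R * y0 * y2 ^+ 3 + 2508 * y1 ^+ 4 - 512 * y1 ^+ 3 * y2
   - 10419%:R * y1 ^+ 2 * y2 ^+ 2 - 6407%:R * y1 * y2 ^+ 3 + 4994 * y2 ^+ 4);
  (4408332555244142248485885961565960964954371039765923786099040994447386824874261562849719769105934508096987657547972455602111990011294472908113147859361999814218753894348445360784978756136216332811123450092450%positive,
   1579807%:R * y0 ^+ 2 * y1 ^+ 2 + 69395%:R * y0 ^+ 2 * y1 * y2 + 183263%:R * y0 ^+ 2 * y2 ^+ 2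
   + 362512%:R * y0 * y1 ^+ 3 + 180740%:R * y0 * y1 ^+ 2 * y2 - 170914%:R * y0 * y1 * y2 ^+ 2
   + 77527%:R * y0 * y2 ^+ 3 - 306664%:R * y1 ^+ 4 - 805637%:R * y1 ^+ 3 * y2
   - 517707%:R * y1 ^+ 2 * y2 ^+ 2 - 459107%:R * y1 * y2 ^+ 3 - 193215%:R * y2 ^+ 4);
  (2982136858762127889833355700992165422333169671954055038000795133056304316047776092018050358973313211429168993867324393046053406611806629926495871406890749905559116893057491905975330109076025225233239253550%positive,
   52087484%:R * y0 ^+ 2 * y1 * y2 + 14934231%:R * y0 ^+ 2 * y2 ^+ 2 - 4040344%:R * y0 * y1 ^+ 3
   - 83538%:R * y0 * y1 ^+ 2 * y2 + 3753302%:R * y0 * y1 * y2 ^+ 2 + 1555844%:R * y0 * y2 ^+ 3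
   - 20729089%:R * y1 ^+ 4 - 2956977%:R * y1 ^+ 3 * y2 - 15130121%:R * y1 ^+ 2 * y2 ^+ 2
   - 8100082%:R * y1 * y2 ^+ 3 - 21290710%:R * y2 ^+ 4);
  (2348873365028694287084744348720083737981362389530504075833364654100744561299852593012683233507560855894191094218392963490827967255504698679767317722466812343452997185122313210430065530046951381663380450%positive,
   2005727833%:R * y0 ^+ 2 * y2 ^+ 2 + 130879288%:R * y0 * y1 ^+ 3
   - 390771790%:R * y0 * y1 ^+ 2 * y2 + 227683490%:R * y0 * y1 * y2 ^+ 2
   + 420998872%:R * y0 * y2 ^+ 3 - 54703979%:R * y1 ^+ 4 - 564079339%:R * y1 ^+ 3 * y2
   - 503437435%:R * y1 ^+ 2 * y2 ^+ 2 - 996754838%:R * y1 * y2 ^+ 3 - 275542102%:R * y2 ^+ 4);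
  (180355275327598868574825687637559037453434625787582281642611032450868506193515176709813507174109377715107803742938539341871239521009678966143126336928635723590544124325636957983840706687571831838900%positive,
   226122031634%:R * y0 * y1 ^+ 3 - 14221238710%:R * y0 * y1 ^+ 2 * y2
   + 14436631546%:R * y0 * y1 * y2 ^+ 2 + 36713914550%:R * y0 * y2 ^+ 3
   - 29561896356%:R * y1 ^+ 4 - 66557750200%:R * y1 ^+ 3 * y2
   - 122601480240%:R * y1 ^+ 2 * y2 ^+ 2 - 41825018269%:R * y1 * y2 ^+ 3
   - 2505193955%:R * y2 ^+ 4);
  (607078372614023711843213639006953867564822997725278314424781047983805240827898615351664216019808780127450816582182804456286723438632318112299423127599769704592605021407206914615396437910610053675%positive,
   3575257612904%:R * y0 * y1 ^+ 2 * y2 + 520839244386%:R * y0 * y1 * y2 ^+ 2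
   - 59911526356%:R * y0 * y2 ^+ 3 - 1816864109418%:R * y1 ^+ 4 - 341150963676%:R * y1 ^+ 3 * y2
   + 479080487026%:R * y1 ^+ 2 * y2 ^+ 2 - 776458434341%:R * y1 * y2 ^+ 3
   - 1580792310525%:R * y2 ^+ 4);
  (2236730527647050333999911487182822184223507546683198525056433680504766618032052747306184174047507833875272781405123149962965231646276195270275023548407411347520831678713819373098070846221266725%positive,
   61372522652942%:R * y0 * y1 * y2 ^+ 2 - 3480129228204%:R * y0 * y2 ^+ 3
   - 23938700763582%:R * y1 ^+ 4 - 8196961205540%:R * y1 ^+ 3 * y2
   + 9554399432014%:R * y1 ^+ 2 * y2 ^+ 2 - 2496679049887%:R * y1 * y2 ^+ 3
   - 32814451837743%:R * y2 ^+ 4);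
  (67512140731040174864253126184063661080171822502899700879294794406180982403668817868343076032959913483369127437035381847202975828438013902902099405645249096129910817422247411095241318871887100%positive,
   355353322842042%:R * y0 * y2 ^+ 3 + 8438365617674%:R * y1 ^+ 4
   - 62216659173458%:R * y1 ^+ 3 * y2 - 158458318977188%:R * y1 ^+ 2 * y2 ^+ 2
   - 104240135610653%:R * y1 * y2 ^+ 3 - 38876574698417%:R * y2 ^+ 4);
  (2607894310798231203267665365275046833410810220729954477993446852197447603092386773512464454728980048611297135647931904866635036319160895878915924616765674311962169323495263020144675844905900%positive,
   1588787693277398%:R * y1 ^+ 4 - 728430642370177%:R * y1 ^+ 3 * y2
   - 686150532067894%:R * y1 ^+ 2 * y2 ^+ 2 - 233017163511776%:R * y1 * y2 ^+ 3
   + 58810644672449%:R * y2 ^+ 4);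
  (5252678689788284818179329414665201667836377112121467830239293155143865720207229017652311444747889971451569579797837425210331532798287924085368977427682245074844147213701019908357720836900%positive,
   29404803520048077%:R * y1 ^+ 3 * y2 - 12544896976108796%:R * y1 ^+ 2 * y2 ^+ 2
   - 9914151634471502%:R * y1 * y2 ^+ 3 - 6945754909467779%:R * y2 ^+ 4);
  (3644145260311512912473402057269990002923962596705271252920839076712522130588950704607454401265436682935360089894708222625946842784019695143654116597988003254000696105558752335956644195200%positive,
   36641311091370421%:R * y1 ^+ 2 * y2 ^+ 2 - 13352463410334488%:R * y1 * y2 ^+ 3
   - 23288847681035933%:R * y2 ^+ 4);
  (4492209062828314963043173961304484121392193491124319264500089113077195693140496678537993042327958906862389131389569865734765161948668006114862458232654760925537634992340386537607086830469581671497318381835505359015355000%positive,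
   y1 * y2 ^+ 3 - y2 ^+ 4)].

Definition sigma01 : seq (positive * R) := [::
  (22308599115550781969255023148831109219443691441299796814469624467083029620657150369765653836635095030221404751538982019550428048633686227842862544013188073062537308508294088475103402957019159174265824771111516222303400%positive,
   22 * y0 ^+ 3 - 2 * y0 ^+ 2 * y1 - 7 * y0 ^+ 2 * y2 - y0 * y1 ^+ 2 - 10 * y0 * y1 * y2
   - 8 * y0 * y2 ^+ 2 + 10 * y1 ^+ 3 - 3 * y1 ^+ 2 * y2 - 4 * y1 * y2 ^+ 2 + 3 * y2 ^+ 3);
  (227638766485212060910765542335011318565751953482650987902751270072275812455685207854751569761582602349198007668765122648473755598302920692274107591971306867985074576615245800766361254663460807900671681337872614513300%positive,
   196 * y0 ^+ 2 * y1 - 62 * y0 ^+ 2 * y2 + 76 * y0 * y1 ^+ 2 + y0 * y1 * y2 - 63 * y0 * y2 ^+ 2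
   - 12 * y1 ^+ 3 - 58 * y1 ^+ 2 * y2 - 48 * y1 * y2 ^+ 2 - 30 * y2 ^+ 3);
  (4262172649084821565988801643719360858252377001377295092647257822629844999170276232174071944472184895048813760606666126184189466521416387429813078317760639230358843136625878822859529874549904488353001693134636186632%positive,
   1175 * y0 ^+ 2 * y2 - 307 * y0 * y1 ^+ 2 - 211 * y0 * y1 * y2 + 63 * y0 * y2 ^+ 2
   - 16 * y1 ^+ 3 - 257 * y1 ^+ 2 * y2 - 358 * y1 * y2 ^+ 2 - 89 * y2 ^+ 3);
  (6147243768916119877949351873263339084428282600444088407008760620146653469104124782967255115062608461099425274319380708277661854934638340615201060739691273393994917104099254203806350852208904454267883762983374732%positive,
   33974%:R * y0 * y1 ^+ 2 - 123 * y0 * y1 * y2 - 4641 * y0 * y2 ^+ 2 - 2738 * y1 ^+ 3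
   - 11226%:R * y1 ^+ 2 * y2 - 10444%:R * y1 * y2 ^+ 2 - 4802 * y2 ^+ 3);
  (38420375737576115131106670236274157240860917478619910575481816327555753213159325530049413749497019629264038985876411012934889079748616619846655157961256525884079625729412172316801173680490973293890480674179800%positive,
   375999%:R * y0 * y1 * y2 - 84896%:R * y0 * y2 ^+ 2 - 152289%:R * y1 ^+ 3
   - 28027%:R * y1 ^+ 2 * y2 - 49874%:R * y1 * y2 ^+ 2 - 60913%:R * y2 ^+ 3);
  (64856788465723074639878314049805469366563313871002744533377192220586026288060248954147618519118296541790539783448218507016318348778005541878973687615267757015091048097751270051813284441213889817105040788200%positive,
   10062893%:R * y0 * y2 ^+ 2 - 2163339%:R * y1 ^+ 3 - 3371909%:R * y1 ^+ 2 * y2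
   - 1203076%:R * y1 * y2 ^+ 2 - 3324569%:R * y2 ^+ 3);
  (326211486447920623496981477136150430501480931450481548370317770833242624877987872102341676190486362060751877694605206433797216985944460971545737831282811512472694971928788844658828043048551385717186214800%positive,
   149510907%:R * y1 ^+ 3 - 67199698%:R * y1 ^+ 2 * y2 - 88507226%:R * y1 * y2 ^+ 2
   + 6196017%:R * y2 ^+ 3);
  (3002269847016104443927711269292058624642174687099675726690229328174516023925115221308964554449883371833032219271600568094550388457595030155874995248578705688970929450815937311347670689056504644395005200%positive,
   1093383157%:R * y1 ^+ 2 * y2 - 553635163%:R * y1 * y2 ^+ 2 - 539747994%:R * y2 ^+ 3);
  (3561737072941293669810629548445616143769668004505862400958855227176038836912877869409675804346647767843218087873800233936440818126344817194194842926365071604181232919518581903400538613388442534452930001952888425152660800%positive,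
   y1 * y2 ^+ 2 - y2 ^+ 3)].

Definition sigma02 : seq (positive * R) := [::
  (22308599115550781969255023148831109219443691441299796814469624467083029620657150369765653836635095030221404751538982019550428048633686227842862544013188073062537308508294088475103402957019159174265824771111516222303400%positive,
   22 * y0 ^+ 3 - 7 * y0 ^+ 2 * y1 - 2 * y0 ^+ 2 * y2 - 8 * y0 * y1 ^+ 2 - 10 * y0 * y1 * y2
   - y0 * y2 ^+ 2 + 3 * y1 ^+ 3 - 4 * y1 ^+ 2 * y2 - 3 * y1 * y2 ^+ 2 + 10 * y2 ^+ 3);
  (73625739655283108809422518643006961120276209377227052192969057647138711619330529273153973058201633763106946374716112275743986959187083260207467141957716412747647882865657057673608590617224947769854207165384541987800%positive,
   303 * y0 ^+ 2 * y1 - 124 * y0 ^+ 2 * y2 + 54 * y0 * y1 ^+ 2 - 48 * y0 * y1 * y2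
   - 117 * y0 * y2 ^+ 2 - y1 ^+ 3 - 50 * y1 ^+ 2 * y2 - 21 * y1 * y2 ^+ 2 + 4 * y2 ^+ 3);
  (344631121790686892299424555350245349924697150276381946435174312390862054388355668938167533463922541018798472392288185120503768745131028026503037685759523634137926260222224525280721062463606138497189905880523388028%positive,
   4700 * y0 ^+ 2 * y2 - 1431 * y0 * y1 ^+ 2 - 243 * y0 * y1 * y2 + 1434 * y0 * y2 ^+ 2
   - 832 * y1 ^+ 3 - 1604 * y1 ^+ 2 * y2 - 1716 * y1 * y2 ^+ 2 - 308 * y2 ^+ 3);
  (1562917843871374259002374392275819691185596164425242539174379486842847985866100424891334959357737714646789354390063611744909552478929272627039953583660899243317792298614551526799552211792206007283740312241608468%positive,
   66813%:R * y0 * y1 ^+ 2 - 11711%:R * y0 * y1 * y2 - 9282%:R * y0 * y2 ^+ 2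
   - 17564%:R * y1 ^+ 3 - 3108 * y1 ^+ 2 * y2 - 17132%:R * y1 * y2 ^+ 2 - 8016%:R * y2 ^+ 3);
  (10342157501165697809296420994998166256125921267574172509457098068705498245834566899286431350631052824831028759010035599471573300610004915527902501507465800201886361087825024287921752737939243067392184464668400%positive,
   710269%:R * y0 * y1 * y2 - 26625%:R * y0 * y2 ^+ 2 - 163061%:R * y1 ^+ 3
   - 104751%:R * y1 ^+ 2 * y2 - 96650%:R * y1 * y2 ^+ 2 - 319182%:R * y2 ^+ 3);
  (68667188364755917382061180213166579637738489085637021865815038802898972919511806221334594120171260132194143818853833436119635470004128874386893494069579444886140938133879923770322914660817187170893501564400%positive,
   10062893%:R * y0 * y2 ^+ 2 - 1885094%:R * y1 ^+ 3 - 3263611%:R * y1 ^+ 2 * y2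
   - 3791163%:R * y1 * y2 ^+ 2 - 1123025%:R * y2 ^+ 3);
  (534676467388726019967057772957573142278833728750436817150903841881922090277193880958537111838331843071830051637373854084028046817989356120730552489313400493389261388502753730423538456824410560445892134800%positive,
   91218107%:R * y1 ^+ 3 - 58301280%:R * y1 ^+ 2 * y2 - 39112844%:R * y1 * y2 ^+ 2
   + 6196017%:R * y2 ^+ 3);
  (5545745006760671744127514051886412637286887901222452352408492920174867179933876019914061618801378296046247017153018360471285620550888743156856489705206486463479527248820861335104568984983272832620288400%positive,
   970183821%:R * y1 ^+ 2 * y2 - 203781367%:R * y1 * y2 ^+ 2 - 766402454%:R * y2 ^+ 3);
  (4014026250409396332699369687630517827492245393369129433223142725852248095011688036395924455746053982868284580432061356101262174177862033317062127582055566483323917282367826665399679907264767473001619837809339547378593600%positive,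
   y1 * y2 ^+ 2 - y2 ^+ 3)].

Definition sigma12 : seq (positive * R) := [::
  (40899098378509766943634209106190366902313434309049627493194311522985554304538109011237032033831007555405908711154800369175784755828424751045247997357511467281318398931872495537689572087868458486154012080371113074222900%positive,
   12 * y0 ^+ 3 - 5 * y0 ^+ 2 * y1 - 5 * y0 ^+ 2 * y2 - y0 * y1 ^+ 2 - 4 * y0 * y1 * y2
   - y0 * y2 ^+ 2 + 4 * y1 ^+ 3 - 2 * y1 ^+ 2 * y2 - 2 * y1 * y2 ^+ 2 + 4 * y2 ^+ 3);
  (201473391027141709081941916779262891144401154231771564005883307995002730564227137986389320363699544607910880350516257976235392885854309118449497523928627917641962556314642835161032374817086002394847350149611394454300%positive,
   203 * y0 ^+ 2 * y1 + 23 * y0 ^+ 2 * y2 + 55 * y0 * y1 ^+ 2 - 8 * y0 * y1 * y2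
   - 17 * y0 * y2 ^+ 2 - 88 * y1 ^+ 3 - 70 * y1 ^+ 2 * y2 - 58 * y1 * y2 ^+ 2 - 40 * y2 ^+ 3);
  (713180145228820209139617404528364216440358068077067483206666576973460993147706683137661311021945290647472142833685868942426169507448881835219460261694258115546770110848293221808964158644552220866716283715438564440%positive,
   3390 * y0 ^+ 2 * y2 - 393 * y0 * y1 ^+ 2 - 120 * y0 * y1 * y2 + 963 * y0 * y2 ^+ 2
   - 508 * y1 ^+ 3 - 847 * y1 ^+ 2 * y2 - 1073 * y1 * y2 ^+ 2 - 1412 * y2 ^+ 3);
  (26598487870926052260764713047815163684988551868389619528009060283963362412086065896921779558599098659091832628190011279682622158738218448015717514812407568887744687213338880034396421863833198757292560278198425240%positive,
   16329%:R * y0 * y1 ^+ 2 + 880 * y0 * y1 * y2 + 961 * y0 * y2 ^+ 2 - 4486 * y1 ^+ 3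
   - 5729%:R * y1 ^+ 2 * y2 - 5051%:R * y1 * y2 ^+ 2 - 2904 * y2 ^+ 3);
  (126267838873726827264212664235792632055811152982239115371835512783270595731978585018743429150283912873572782561691142289575371117705669924959925354727942634068592551341280035115982274555661809960428645727386700%positive,
   238036%:R * y0 * y1 * y2 + 11968%:R * y0 * y2 ^+ 2 - 127861%:R * y1 ^+ 3
   + 3739 * y1 ^+ 2 * y2 + 3211 * y1 * y2 ^+ 2 - 129093%:R * y2 ^+ 3);
  (9648685202719291321060080463785192984413591263264460269112743171126517655049269103706591111399625688205203642893231608622192124016172418946467411284349175308652944783807205266549087749634525222723755702571470%positive,
   854760%:R * y0 * y2 ^+ 2 - 115601%:R * y1 ^+ 3 - 248929%:R * y1 ^+ 2 * y2
   - 286639%:R * y1 * y2 ^+ 2 - 203591%:R * y2 ^+ 3);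
  (58143520951821250172523123981929531859343385012092796767467197477273602557165406745638481623791801476778581144671561224181674537471734169294557712142098546202647609839110702592368729851130409502176999125830%positive,
   9875281%:R * y1 ^+ 3 - 5404551%:R * y1 ^+ 2 * y2 - 5123821%:R * y1 * y2 ^+ 2
   + 653091%:R * y2 ^+ 3);
  (68596965362926528608858796383437829833410407159303617376447450268028212379663991907284997402521627981407620449330539967353635994901535429880242739061111797883082300714506987732811068413633327581507462800%positive,
   241501237%:R * y1 ^+ 2 * y2 - 76298694%:R * y1 * y2 ^+ 2 - 165202543%:R * y2 ^+ 3);
  (3773284478975949634431513773789965027080130162009814494334415410834734200847607182111568959577467902924286706484435470297083637458878713865077871145327381646595012481243838411297235329927027381129045853479096567683267200%positive,
   y1 * y2 ^+ 2 - y2 ^+ 3)].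

End Certificate.

Lemma diff44_521_certificate (R : comPzRingType) (y0 y1 y2 : R) :
  posr R cert_scale * diff44_521 y0 y1 y2 =
  sos (sigma0 y0 y1 y2) + y0 * y1 * sos (sigma01 y0 y1 y2) +
  y0 * y2 * sos (sigma02 y0 y1 y2) + y1 * y2 * sos (sigma12 y0 y1 y2).
Proof.
(* [simpl] must never see the data: it would expand the large literals in unary. *)
set rhs := (X in _ = X).
rewrite /diff44_521 /h3part /h3 unlock /= {}/rhs /sos unlock.
cbv [reducebig applybig foldr comp fst snd posr cert_scale sigma0 sigma01 sigma02 sigma12].
ring.
Qed.

Lemma Hnorm44_sub_521_ge0 (R : realFieldType) (x : 'I_3 -> R) :
  (forall i, 0 <= x i) ->
  0 <= (Hnorm R 3 [:: 4; 4]%N - Hnorm R 3 [:: 5; 2; 1]%N).@[x].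
Proof.
move=> x_ge0; rewrite Hnorm44_sub_521_meval mulr_ge0 ?invr_ge0 ?ler0n //.
rewrite -(pmulr_rge0 _ (posr_gt0 R cert_scale)).
by rewrite diff44_521_certificate !addr_ge0 ?mulr_ge0 ?sos_ge0.
Qed.

Definition scaled_terms (F : unitRingType) (V : pzRingType) (D : F) (m : V)
    (s : seq (positive * V)) : seq (F * V) :=
  [seq (posr F t.1 / D, m * t.2) | t <- s].

Lemma sum_scaled_terms (F : fieldType) (V : comAlgType F) (D : F) (m : V) s :
  \sum_(dq <- scaled_terms D m s) dq.1 *: dq.2 ^+ 2 = D^-1 *: (m ^+ 2 * sos s).
Proof.
rewrite big_map /sos mulr_sumr scaler_sumr; apply: eq_bigr => t _ /=.
by rewrite mulrC -scalerA /posr scaler_int -mulrzl exprMn mulrCA.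
Qed.

Lemma sos_cert_cat n (P Q : {mpoly rat[n]}) s t :
  sos_cert P s -> sos_cert Q t -> sos_cert (P + Q) (s ++ t).
Proof. by case=> pos_s -> [pos_t ->]; rewrite /sos_cert all_cat pos_s pos_t big_cat. Qed.

Lemma sos_cert_scaled_terms n (D : rat) (m P : {mpoly rat[n]}) s :
  0 < D -> P = D^-1 *: (m ^+ 2 * sos s) -> sos_cert P (scaled_terms D m s).
Proof.
move=> D_gt0 ->; split; last by rewrite sum_scaled_terms.
by elim: s => //= t s ->; rewrite andbT divr_gt0 ?posr_gt0.
Qed.

Lemma scaler_posr (F : numFieldType) (V : lalgType F) (a : F) p (v : V) :
  a^-1 *: v = (a * posr F p)^-1 *: (posr V p * v).
Proof.
rewrite /posr mulrzl -scaler_int scalerA invfM -mulrA mulVf ?mulr1 //.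
exact: lt0r_neq0 (posr_gt0 F p).
Qed.

Lemma Hnorm44_sub_521_sos : exists s : seq (rat * {mpoly rat[3]}),
  size s = 41%N /\
  sos_cert (sqsubst (Hnorm rat 3 [:: 4; 4]%N - Hnorm rat 3 [:: 5; 2; 1]%N)) s.
Proof.
pose D : rat := 9450 * posr rat cert_scale.
have D_gt0 : 0 < D by apply: mulr_gt0; [rewrite ltr0n | exact: posr_gt0].
exists (scaled_terms D 1 (sigma0 ('X_0 ^+ 2) ('X_1 ^+ 2) ('X_2 ^+ 2)) ++
        scaled_terms D ('X_0 * 'X_1) (sigma01 ('X_0 ^+ 2) ('X_1 ^+ 2) ('X_2 ^+ 2)) ++
        scaled_terms D ('X_0 * 'X_2) (sigma02 ('X_0 ^+ 2) ('X_1 ^+ 2) ('X_2 ^+ 2)) ++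
        scaled_terms D ('X_1 * 'X_2) (sigma12 ('X_0 ^+ 2) ('X_1 ^+ 2) ('X_2 ^+ 2))).
split; first by rewrite !size_cat !size_map.
rewrite Hnorm44_sub_521_sqsubst (scaler_posr _ cert_scale).
(* With its arguments left implicit, the certificate would first be matched
   against [9450 * posr rat cert_scale], forcing a computation on that constant. *)
rewrite (diff44_521_certificate ('X_0 ^+ 2) ('X_1 ^+ 2) ('X_2 ^+ 2)).
rewrite !scalerDr -!addrA.
apply: sos_cert_cat; first by apply: sos_cert_scaled_terms D_gt0 _; rewrite expr1n mul1r.
do 2 (apply: sos_cert_cat; first by apply: sos_cert_scaled_terms D_gt0 _; rewrite exprMn).
by apply: sos_cert_scaled_terms D_gt0 _; rewrite exprMn.
Qed.

Definition dominatesb (mu lam : seq nat) : bool :=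
  all (fun k => sumn (take k lam) <= sumn (take k mu))%N
    (iota 0 (maxn (size lam) (size mu)).+1).

Lemma dominatesP mu lam : reflect (dominates mu lam) (dominatesb mu lam).
Proof.
apply: (iffP allP) => [dom k | dom k _]; last exact: dom.
have [le_k | lt_k] := leqP k (maxn (size lam) (size mu)).
  by apply: dom; rewrite mem_iota.
have := dom (maxn (size lam) (size mu)); rewrite mem_iota ltnS leqnn => /(_ isT).
by rewrite !take_oversize ?leq_maxl ?leq_maxr //; lia.
Qed.

(* The partitions of n with parts at most m; [fuel >= n] bounds the recursion. *)
Fixpoint bounded_partitions (fuel m n : nat) : seq (seq nat) :=
  if n is 0 then [:: [::]] else
  if fuel is fuel'.+1 then
    [seq k :: l | k <- iota 1 (minn m n), l <- bounded_partitions fuel' k (n - k)]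
  else [::].

Definition partitions (n : nat) : seq (seq nat) := bounded_partitions n n n.

Lemma mem_bounded_partitions fuel m l :
  path geq m l -> all (fun k => 0 < k)%N l -> (sumn l <= fuel)%N ->
  l \in bounded_partitions fuel m (sumn l).
Proof.
elim: l fuel m => [|k l IHl] fuel m /=; first by case: fuel.
case/andP=> le_km path_l /andP[k_gt0 pos_l] le_sum.
case: k k_gt0 le_km path_l le_sum => // k _ le_km path_l le_sum.
case: fuel le_sum => [|fuel] le_sum; first lia.
rewrite addSn /=; apply: allpairs_f_dep; first by rewrite mem_iota; lia.
by rewrite subSS addKn; apply: IHl => //; lia.
Qed.

Lemma mem_partitions l : is_partition l -> l \in partitions (psize l).
Proof.
case/andP=> sorted_l pos_l; apply: mem_bounded_partitions => //.
case: l sorted_l pos_l => //= k l -> _; rewrite andbT; lia.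
Qed.

(* The point (0, 0, 1) works whenever h_mu(1,1,1) > h_lam(1,1,1),
   since H_lam(0, 0, 1) = 1 / h_lam(1,1,1). *)
Definition separating_points : seq ((seq nat * seq nat) * (nat * nat * nat)) := [::
  (([:: 4; 1; 1], [:: 3; 3]), (2, 2, 3));
  (([:: 3; 3], [:: 4; 1; 1]), (0, 0, 1));
  (([:: 3; 1; 1; 1], [:: 2; 2; 2]), (1, 1, 2));
  (([:: 2; 2; 2], [:: 3; 1; 1; 1]), (0, 0, 1));
  (([:: 5; 1; 1], [:: 4; 3]), (1, 1, 2));
  (([:: 4; 3], [:: 5; 1; 1]), (0, 0, 1));
  (([:: 4; 1; 1; 1], [:: 3; 3; 1]), (2, 2, 3));
  (([:: 4; 1; 1; 1], [:: 3; 2; 2]), (0, 1, 2));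
  (([:: 3; 3; 1], [:: 4; 1; 1; 1]), (0, 0, 1));
  (([:: 3; 2; 2], [:: 4; 1; 1; 1]), (0, 0, 1));
  (([:: 3; 1; 1; 1; 1], [:: 2; 2; 2; 1]), (1, 1, 2));
  (([:: 2; 2; 2; 1], [:: 3; 1; 1; 1; 1]), (0, 0, 1))]%N.

Lemma small_partitions_comparable_or_separated :
  all (fun n => all (fun lam => all (fun mu =>
      [|| dominatesb mu lam, dominatesb lam mu | (lam, mu) \in unzip1 separating_points])
    (partitions n)) (partitions n)) (iota 0 8).
Proof. by []. Qed.

Lemma incomparable_small lam mu :
  is_partition lam -> is_partition mu -> psize lam = psize mu -> (psize lam <= 7)%N ->
  incomparable lam mu -> (lam, mu) \in unzip1 separating_points.
Proof.
move=> part_lam part_mu eq_size le7 [not_mu_lam not_lam_mu].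
have /allP/(_ (psize lam)) := small_partitions_comparable_or_separated.
rewrite mem_iota ltnS le7 => /(_ isT) /allP/(_ lam (mem_partitions part_lam)).
move=> /allP/(_ mu); rewrite eq_size mem_partitions // => /(_ isT).
by case/or3P => // /dominatesP.
Qed.

Definition nat_point (R : pzSemiRingType) (a b c : nat) : 'I_3 -> R :=
  fun i => (nth 0 [:: a; b; c] i)%:R.

Lemma Hnorm_sub_meval_lt0 (R : realFieldType) lam mu (x : 'I_3 -> R) :
  h3part mu (x 0) (x 1) (x 2) * h3part lam 1 1 1 <
    h3part lam (x 0) (x 1) (x 2) * h3part mu 1 1 1 ->
  (Hnorm R 3 mu - Hnorm R 3 lam).@[x] < 0.
Proof.
move=> cross; rewrite mevalB !HnormE !mevalZ !hpart_meval subr_lt0.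
rewrite ltr_pdivrMl ?h3part_gt0 // mulrCA ltr_pdivlMl ?h3part_gt0 //.
by rewrite mulrC [X in _ < X]mulrC.
Qed.

Lemma separating_pointsP (R : realFieldType) lam mu a b c :
  ((lam, mu), (a, b, c)) \in separating_points ->
  (Hnorm R 3 mu - Hnorm R 3 lam).@[nat_point R a b c] < 0.
Proof.
move=> sep; apply: Hnorm_sub_meval_lt0; move: sep; rewrite !inE.
by repeat case/orP; move/eqP=> [-> -> -> -> ->]; rewrite /h3part /h3 /nat_point unlock /=; lra.
Qed.

Theorem theorem1p2 :
  (* (H_44 - H_521)(x1^2,x2^2,x3^2) is a positive rational combination of 41 squares
     of polynomials with rational coefficients *)
  (exists s : seq (rat * {mpoly rat[3]}),
      size s = 41%N /\
      sos_cert (sqsubst (Hnorm rat 3 [:: 4; 4]%N - Hnorm rat 3 [:: 5; 2; 1]%N)) s) /\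
  (* H_44 - H_521 >= 0 on the nonnegative orthant *)
  (forall (R : realFieldType) (x : 'I_3 -> R),
      (forall i, 0 <= x i) ->
      0 <= (Hnorm R 3 [:: 4; 4]%N - Hnorm R 3 [:: 5; 2; 1]%N).@[x]) /\
  (* (4,4) and (5,2,1) are incomparable in dominance order *)
  incomparable [:: 4; 4]%N [:: 5; 2; 1]%N /\
  (* degree minimality *)
  (forall (R : realFieldType) (lam mu : seq nat),
      is_partition lam -> is_partition mu ->
      psize lam = psize mu -> (psize lam <= 7)%N ->
      incomparable lam mu ->
      exists x : 'I_3 -> R, (forall i, 0 <= x i) /\
        (Hnorm R 3 mu - Hnorm R 3 lam).@[x] < 0).
Proof.
split; first exact: Hnorm44_sub_521_sos.
split; first exact: Hnorm44_sub_521_ge0.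
split; first by split=> /dominatesP.
move=> R lam mu part_lam part_mu eq_size le7 incomp.
have := incomparable_small part_lam part_mu eq_size le7 incomp.
case/mapP=> [[[l m] [[a b] c]] sep [-> ->]].
exists (nat_point R a b c); split; first by move=> i; apply: ler0n.
exact: separating_pointsP sep.
Qed.
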